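(* Let $\mathcal A=\mathcal A_1\times\cdots\times\mathcal A_m$ be a finite tree multi-algebra, let $\mathtt A$ be a plenary anti-tree structure of $\mathcal A$, and let $B$ be a basic relation of $\mathcal A$. If $B_\ell\subseteq\Rsh_k^\ell B_k$ for all distinct $k,\ell$ such that $k\to\ell$ is an edge of $\mathtt A$, then $B$ is closed under projection, i.e. $B_j\subseteq\Rsh_i^jB_i$ for all distinct $i,j\in\{1,\dots,m\}$.
   Context: A finite non-associative algebra is a tuple $(\mathcal A,\cup,\neg,\emptyset,\mathcal B,\diamond,\overline{\cdot},e)$ where $(\mathcal A,\cup,\neg,\emptyset,\mathcal B)$ is a finite Boolean algebra and for all $x,y,z$: $\overline{\overline x}=x$, $\overline{x\cup y}=\overline x\cup\overline y$, $\overline{x\diamond y}=\overline y\diamond\overline x$, $e\diamond x=x\diamond e=x$, $x\diamond(y\cup z)=(x\diamond y)\cup(x\diamond z)$, $(x\diamond y)\cap\overline z=\emptyset\iff(y\diamond z)\cap\overline x=\emptyset$. $r\subseteq r'$ means $r\cup r'=r'$; atoms are basic relations; $\mathsf B_i$ is the set of atoms of $\mathcal A_i$. A projection operator from $\mathcal A$ to $\mathcal A'$ is a map $\Rsh$ with $\Rsh(r\cup r')=\Rsh r\cup\Rsh r'$ and $\Rsh\overline r=\overline{\Rsh r}$. A finite multi-algebra is a product $\mathcal A_1\times\cdots\times\mathcal A_m$ of finite non-associative algebras with projection operators $\Rsh_i^j:\mathcal A_i\to\mathcal A_j$ for all distinct $i,j$. A relation $R=(R_1,\dots,R_m)$ is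 basic if all $R_i$ are atoms; it is closed under projection if $R_j\subseteq\Rsh_i^jR_i$ for all distinct $i,j$. The inverse projection $\check\Rsh_i^j:\mathcal A_j\to\mathcal A_i$ of $\Rsh_i^j$ is the projection operator defined by: for all $b\in\mathsf B_i$, $b'\in\mathsf B_j$, $b\subseteq\check\Rsh_i^jb'\iff b'\subseteq\Rsh_i^jb$. An anti-tree structure on a set $V$ is a directed graph $(V,E)$ with a root $r\in V$ such that every $v\neq r$ has exactly one directed path from $v$ to $r$; write $v\to v'$ for $(v,v')\in E$. A plenary anti-tree structure of $\mathcal A$ is an anti-tree structure $\mathtt A$ on $\{1,\dots,m\}$ such that for all distinct $i,j$, letting $i=k_0\to\cdots\to k_s\leftarrow\cdots\leftarrow k_{s+t+1}=j$ be the shortest oriented chain between $i$ and $j$ in $\mathtt A$, every $b\in\mathsf B_i$ satisfies $\Rsh_i^jb\supseteq\check\Rsh_j^{k_{s+t}}\cdots\check\Rsh_{k_{s+1}}^{k_s}\Rsh_{k_{s-1}}^{k_s}\cdots\Rsh_i^{k_1}b$ (compositions of maps). $\mathcal A$ is a tree multi-algebra if it has a plenary anti-tree structure. *)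

From HB Require Import structures.
From mathcomp Require Import all_boot.
Set Implicit Arguments. Unset Strict Implicit. Unset Printing Implicit Defensive.

(* A finite Boolean algebra is represented (up to isomorphism) as the powerset
   {set T} of its finite set T of atoms; union = :|:, complement = ~:,
   empty = set0, top = setT, r \subset r' is r :|: r' = r'. *)

Definition is_atom (T : finType) (r : {set T}) : Prop :=
  r != set0 /\ forall r' : {set T}, r' \subset r -> r' = set0 \/ r' = r.

Record naAlg := NaAlg {
  carrier : finType;
  comp : {set carrier} -> {set carrier} -> {set carrier};
  conv : {set carrier} -> {set carrier};
  unit_e : {set carrier};
  conv_invol : forall x, conv (conv x) = x;
  conv_union : forall x y, conv (x :|: y) = conv x :|: conv y;
  conv_comp : forall x y, conv (comp x y) = comp (conv y) (conv x);
  comp_e_l : forall x, comp unit_e x = x;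
  comp_e_r : forall x, comp x unit_e = x;
  comp_union_r : forall x y z, comp x (y :|: z) = comp x y :|: comp x z;
  comp_cycle : forall x y z,
    (comp x y :&: conv z == set0) = (comp y z :&: conv x == set0)
}.

Definition is_projection (A A' : naAlg)
  (f : {set carrier A} -> {set carrier A'}) : Prop :=
  (forall r r', f (r :|: r') = f r :|: f r') /\
  (forall r, f (conv r) = conv (f r)).

(* Inverse projection of f : A_i -> A_j, as a map A_j -> A_i:
   the union-preserving map with, for atoms [set b], [set b'],
   [set b] \subset invproj f [set b'] <-> [set b'] \subset f [set b]. *)
Definition invproj (Ti Tj : finType) (f : {set Ti} -> {set Tj})
  (r : {set Tj}) : {set Ti} :=
  [set b | [exists b' in r, b' \in f [set b]]].

Definition anti_tree (m : nat) (E : rel 'I_m) (r : 'I_m) : Prop :=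
  forall v : 'I_m, v != r ->
    exists! p : seq 'I_m, path E v p /\ last v p = r.

Fixpoint chain_map (m : nat) (S : 'I_m -> finType)
  (F : forall x y : 'I_m, {set S x} -> {set S y}) (x : 'I_m) (ks : seq 'I_m)
  : {set S x} -> {set S (last x ks)} :=
  match ks return {set S x} -> {set S (last x ks)} with
  | [::] => fun r => r
  | y :: ks' => fun r => chain_map F ks' (F x y r)
  end.

(* An oriented chain
   i = k_0 -> ... -> k_s <- ... <- k_n = j is given by the upward list
   us = [k_1..k_s] (path E i us) and the downward list ds = [k_{s+1}..k_n]
   (each k_{a+1} -> k_a); its length is size us + size ds. *)
Definition plenary (m : nat) (A : 'I_m -> naAlg)
  (P : forall i j : 'I_m, {set carrier (A i)} -> {set carrier (A j)})
  (E : rel 'I_m) : Prop :=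
  forall (i : 'I_m) (us ds : seq 'I_m),
    i != last (last i us) ds ->
    path E i us ->
    path (fun x y => E y x) (last i us) ds ->
    (forall us' ds' : seq 'I_m,
        path E i us' ->
        path (fun x y => E y x) (last i us') ds' ->
        last (last i us') ds' = last (last i us) ds ->
        size us + size ds <= size us' + size ds') ->
    forall b : {set carrier (A i)}, is_atom b ->
      chain_map (S := fun k => carrier (A k))
                (fun x y => invproj (P y x)) ds
                (chain_map (S := fun k => carrier (A k)) P us b)
      \subset P i (last (last i us) ds) b.

(* Plenarity bounds P i j b from below by the projections up a shortest
   oriented chain i -> ... -> k_s <- ... <- j followed by the inverse
   projections back down, so it suffices to follow B i along that composite.
   Going up, an edge k -> l gives B l \subset P k l (B k), and projections are
   monotone.  Going down, the same inclusion for an edge l -> k reads, on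
   atoms, B l \subset invproj (P l k) (B k).  Shortest chains exist because
   every vertex has a path to the root. *)
From Stdlib Require Import Classical.
From HB Require Import structures.
From mathcomp Require Import all_boot.

Set Implicit Arguments.
Unset Strict Implicit.
Unset Printing Implicit Defensive.

Lemma is_atom_set1 (T : finType) (r : {set T}) :
  is_atom r -> exists b, r = [set b].
Proof.
case=> /set0Pn[b rb] min_r; exists b.
have [|/setP/(_ b)|//] := min_r [set b]; first by rewrite sub1set.
by rewrite !inE eqxx.
Qed.

Lemma projection_subset (A A' : naAlg) (f : {set carrier A} -> {set carrier A'})
    (X Y : {set carrier A}) :
  is_projection f -> X \subset Y -> f X \subset f Y.
Proof. by case=> fU _ /setUidPr <-; rewrite fU subsetUl. Qed.

Lemma invproj_atom_subset (Ti Tj : finType) (f : {set Ti} -> {set Tj})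
    (r : {set Ti}) (r' X : {set Tj}) :
  is_atom r -> is_atom r' -> r' \subset f r -> r' \subset X ->
  r \subset invproj f X.
Proof.
move=> /is_atom_set1[b ->] /is_atom_set1[b' ->].
rewrite !sub1set => b'_fb b'X; rewrite inE.
by apply/existsP; exists b'; rewrite b'X.
Qed.

Lemma last_sub_chain_map (m : nat) (S : 'I_m -> finType)
    (F : forall x y : 'I_m, {set S x} -> {set S y}) (R : rel 'I_m)
    (B : forall x : 'I_m, {set S x}) :
  (forall x y (X : {set S x}), R x y -> B x \subset X -> B y \subset F x y X) ->
  forall x ks (X : {set S x}), path R x ks -> B x \subset X ->
    B (last x ks) \subset chain_map F ks X.
Proof.
move=> F_step x ks; elim: ks x => [|y ks IH] x X //= /andP[Rxy path_ks] BX.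
exact/IH/F_step.
Qed.

Lemma ex_argmin (T : Type) (Q : T -> Prop) (f : T -> nat) :
  (exists x, Q x) -> exists2 x, Q x & forall y, Q y -> f x <= f y.
Proof.
case=> x; elim: {x}(f x).+1 {-2}x (ltnSn (f x)) => // n IH x fx Qx.
have [[y Qy fyx] | no_smaller] := classic (exists2 y, Q y & f y < f x).
  exact: (IH y (leq_trans fyx fx)).
exists x => // y Qy; rewrite leqNgt; apply/negP => fyx.
by apply: no_smaller; exists y.
Qed.

Definition oriented_chain (m : nat) (E : rel 'I_m) (i j : 'I_m)
    (us ds : seq 'I_m) : Prop :=
  [/\ path E i us, path (fun x y => E y x) (last i us) ds
    & last (last i us) ds = j].

Section AntiTree.

Variables (m : nat) (E : rel 'I_m) (root : 'I_m).
Hypothesis tree : anti_tree E root.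

Lemma anti_tree_path_to_root (x : 'I_m) :
  exists p, path E x p /\ last x p = root.
Proof.
have [-> | x_root] := eqVneq x root; first by exists [::].
by have [p [p_root _]] := tree x_root; exists p.
Qed.

(* A loop could be inserted into the unique path to the root. *)
Lemma anti_tree_irreflexive (v : 'I_m) : v != root -> irreflexive E.
Proof.
move=> v_root x; apply/negbTE/negP.
have same_size w p q : w != root -> path E w p -> last w p = root ->
    path E w q -> last w q = root -> size p = size q.
  move=> w_root pw lp qw lq; have [r [_ r_uniq]] := tree w_root.
  by rewrite -(r_uniq p (conj pw lp)) -(r_uniq q (conj qw lq)).
have [-> Err | x_root Exx] := eqVneq x root.
  have [p [pv lv]] := anti_tree_path_to_root v.
  have := same_size v p (rcons p root) v_root pv lv.
  rewrite rcons_path pv lv Err last_rcons size_rcons.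
  by move=> /(_ erefl erefl)/n_Sn.
have [p [px lx]] := anti_tree_path_to_root x.
have := same_size x p (x :: p) x_root px lx; rewrite /= Exx px lx.
by move=> /(_ erefl erefl)/n_Sn.
Qed.

Lemma oriented_chain_exists (i j : 'I_m) :
  exists us ds, oriented_chain E i j us ds.
Proof.
have [us [up lu]] := anti_tree_path_to_root i.
have [ps [pj lp]] := anti_tree_path_to_root j.
exists us, (rev (belast j ps)); split=> //.
  by rewrite lu -lp rev_path.
rewrite lu; case: ps pj lp => [|y ps] //= _ <-.
by rewrite rev_cons last_rcons.
Qed.

Lemma shortest_oriented_chain (i j : 'I_m) :
  exists us ds, oriented_chain E i j us ds /\
    forall us' ds', oriented_chain E i j us' ds' ->
      size us + size ds <= size us' + size ds'.
Proof.
have [|[us ds] chain shortest] :=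
  @ex_argmin _ (fun c => oriented_chain E i j c.1 c.2)
            (fun c => size c.1 + size c.2).
  by have [us [ds chain]] := oriented_chain_exists i j; exists (us, ds).
by exists us, ds; split=> // us' ds' chain'; apply: (shortest (us', ds')).
Qed.

End AntiTree.

Theorem lemma5p11 (m : nat) (A : 'I_m -> naAlg)
  (P : forall i j : 'I_m, {set carrier (A i)} -> {set carrier (A j)})
  (HP : forall i j : 'I_m, i != j -> is_projection (P i j))
  (E : rel 'I_m) (root : 'I_m)
  (Htree : anti_tree E root)
  (Hplen : plenary P E)
  (B : forall i : 'I_m, {set carrier (A i)})
  (HB : forall i : 'I_m, is_atom (B i))
  (Hedge : forall k l : 'I_m, k != l -> E k l -> B l \subset P k l (B k)) :
  forall i j : 'I_m, i != j -> B j \subset P i j (B i).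
Proof.
move=> i j ij.
have [v v_root] : exists v, v != root.
  by have [<- | ] := eqVneq i root; [exists j; rewrite eq_sym | exists i].
have neq_of_edge x y : E x y -> x != y.
  by apply: contraTneq => ->; rewrite (anti_tree_irreflexive Htree v_root).
have [us [ds [[up down lj] shortest]]] := shortest_oriented_chain Htree i j.
subst j.
apply: subset_trans (Hplen i us ds ij up down _ (B i) (HB i)); last first.
  by move=> us' ds' up' down' last'; apply: shortest.
apply: (last_sub_chain_map _ down) => [x y X Eyx BX|].
  exact: invproj_atom_subset (HB y) (HB x) (Hedge _ _ (neq_of_edge _ _ Eyx) Eyx) BX.
apply: (last_sub_chain_map _ up (subxx _)) => x y X Exy BX.
have xy := neq_of_edge _ _ Exy.
exact: subset_trans (Hedge _ _ xy Exy) (projection_subset (HP _ _ xy) BX).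
Qed.
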